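(* Let $a^*$ and $b^*$ be the right and left endpoints (possibly infinite) of the interval $\mathbf{R}_j$. Then: - $a^*\notin\mathbf{R}_j$ if and only if $m_{j,0}((c,a^* ))=\infty$ for every $c\in(b^*,a^* )$; - $b^*\notin\mathbf{R}_j$ if and only if $m_{j,0}((b^*,c))=\infty$ for every $c\in(b^*,a^* )$.
   Context: Let $m$ be Lebesgue measure. Let $G\subset\mathbf{R}$ be open such that $m(G\cap(a,b))>0$ for every nonempty bounded open interval $(a,b)$, and let $F=\mathbf{R}\setminus G$ satisfy $m(F)>0$ and have no isolated points. Assume $m(G)=\infty$. Write $G=\bigcup_{n\ge1}I_n$, where $I_n=(a_n,b_n)$ are its disjoint components, and let $H=\{a_n,b_n:n\ge1\}\setminus\{\pm\infty\}$. Fix $z\in F\setminus H$ and define $j(x)=\int_z^x1_F(t)\,dt$ for $x\in\mathbf{R}$. Then $j$ is nondecreasing, $\mathbf{R}_j:=j(\mathbf{R})$ is an interval, and $j$ is constant exactly on each closure $\bar I_n$; write $p_n^*=j(\bar I_n)$. Let $m_j=m\circ j^{-1}$ be the image measure on $\mathbf{R}_j$, $\mathbf{R}_{j,0}$ the interior of $\mathbf{R}_j$, and $m_{j,0}=m_j|_{\mathbf{R}_{j,0}}$. *)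

From Stdlib Require Import Reals.
Open Scope R_scope.

Inductive ereal : Type := NInf | Fin (r : R) | PInf.

Definition elt (x y : ereal) : Prop :=
  match x, y with
  | NInf, NInf => False
  | NInf, _ => True
  | Fin a, Fin b => a < b
  | Fin _, PInf => True
  | Fin _, NInf => False
  | PInf, _ => False
  end.

Definition ele (x y : ereal) : Prop := elt x y \/ x = y.

(* Lebesgue outer measure, via countable covers by open intervals.
   outer_le A r  <->  m*(A) <= r. *)
Definition outer_le (A : R -> Prop) (r : R) : Prop :=
  exists a b : nat -> R,
    (forall n, a n <= b n) /\
    (forall x, A x -> exists n, a n < x /\ x < b n) /\
    (forall N, sum_f_R0 (fun n => b n - a n) N <= r).

Definition meas_eq (A : R -> Prop) (r : R) : Prop :=
  (forall eps, 0 < eps -> outer_le A (r + eps)) /\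
  (forall r', outer_le A r' -> r <= r').

Definition meas_infinite (A : R -> Prop) : Prop :=
  ~ exists r, outer_le A r.

Definition meas_pos (A : R -> Prop) : Prop :=
  ~ (forall eps, 0 < eps -> outer_le A eps).

Definition is_open (G : R -> Prop) : Prop :=
  forall x, G x -> exists eps, 0 < eps /\ forall y, Rabs (y - x) < eps -> G y.

Definition no_isolated_points (F : R -> Prop) : Prop :=
  forall x, F x -> forall eps, 0 < eps ->
    exists y, F y /\ y <> x /\ Rabs (y - x) < eps.

Definition eint (a b : ereal) (x : R) : Prop := elt a (Fin x) /\ elt (Fin x) b.

Definition component (G : R -> Prop) (a b : ereal) : Prop :=
  elt a b /\ (forall x, eint a b x -> G x) /\
  (forall r, a = Fin r -> ~ G r) /\ (forall r, b = Fin r -> ~ G r).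

Definition endpoints (G : R -> Prop) (h : R) : Prop :=
  exists a b, component G a b /\ (a = Fin h \/ b = Fin h).

(* j(x) = \int_z^x 1_F(t) dt  (oriented Lebesgue integral of the indicator) *)
Definition is_j (F : R -> Prop) (z : R) (j : R -> R) : Prop :=
  forall x,
    (z <= x -> meas_eq (fun t => F t /\ z <= t /\ t <= x) (j x)) /\
    (x < z -> meas_eq (fun t => F t /\ x <= t /\ t <= z) (- j x)).

Definition is_esup (S : R -> Prop) (e : ereal) : Prop :=
  (forall x, S x -> ele (Fin x) e) /\
  (forall u, (forall x, S x -> ele (Fin x) u) -> ele e u).

Definition is_einf (S : R -> Prop) (e : ereal) : Prop :=
  (forall x, S x -> ele e (Fin x)) /\
  (forall u, (forall x, S x -> ele u (Fin x)) -> ele u e).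

(* Since j is nondecreasing, if the supremum astar of its range is not attained,
   every level c < astar is exceeded from some x1 on and never reached, so the
   preimage of (c, astar) contains the half-line [x1, +oo), which has infinite
   measure.  If astar = j x1 is attained, pick x0 with j x0 < j x1 (j is not
   constant, otherwise F would be a countable union of null compact pieces,
   contradicting m(F) > 0); for c the midpoint of j x0 and j x1 the preimage of
   (c, astar) lies in the bounded interval (x0, x1).  The infimum bstar is
   symmetric.  The measure-theoretic facts come directly from the covering
   definition of outer measure, via Heine-Borel. *)

From Stdlib Require Import Reals Lra Lia List Classical ClassicalEpsilon.
Open Scope R_scope.

Definition len (p : R * R) : R := snd p - fst p.

Fixpoint total_length (l : list (R * R)) : R :=
  match l with nil => 0 | p :: l' => len p + total_length l' end.

Definition ordered_intervals (l : list (R * R)) : Prop :=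
  forall p, In p l -> fst p <= snd p.

Definition interval_eq_dec (p q : R * R) : {p = q} + {p <> q}.
Proof. decide equality; apply Req_EM_T. Defined.

Lemma total_length_nonneg l : ordered_intervals l -> 0 <= total_length l.
Proof.
  induction l as [|p l IH]; simpl; intros Hl; [lra|].
  assert (fst p <= snd p) by (apply Hl; left; reflexivity).
  assert (0 <= total_length l) by (apply IH; intros q Hq; apply Hl; right; exact Hq).
  unfold len; lra.
Qed.

Lemma ordered_intervals_remove l y :
  ordered_intervals l -> ordered_intervals (remove interval_eq_dec y l).
Proof. intros Hl p Hp; apply in_remove in Hp; apply Hl, Hp. Qed.

Lemma total_length_remove l y : ordered_intervals l -> In y l ->
  total_length (remove interval_eq_dec y l) + len y <= total_length l.
Proof.
  induction l as [|p l IH]; simpl; intros Hl Hy; [contradiction|].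
  assert (Hl' : ordered_intervals l) by (intros q Hq; apply Hl; right; exact Hq).
  destruct (interval_eq_dec y p) as [<-|ne].
  - destruct (in_dec interval_eq_dec y l) as [i|ni].
    + assert (total_length (remove interval_eq_dec y l) + len y <= total_length l)
        by (apply IH; auto).
      assert (fst y <= snd y) by (apply Hl; left; reflexivity).
      unfold len in *; lra.
    + rewrite notin_remove by exact ni.
      assert (0 <= total_length l) by (apply total_length_nonneg; exact Hl').
      lra.
  - destruct Hy as [e|i]; [congruence|].
    simpl; assert (total_length (remove interval_eq_dec y l) + len y <= total_length l)
      by (apply IH; auto).
    lra.
Qed.

(* Induction on the number of intervals: the interval containing v is removed
   and the rest covers [u, its left end]. *)
Lemma segment_length_le_cover : forall n l u v, (length l <= n)%nat ->
  ordered_intervals l -> u <= v ->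
  (forall x, u <= x <= v -> exists p, In p l /\ fst p < x < snd p) ->
  v - u <= total_length l.
Proof.
  induction n as [|n IH]; intros l u v Hn Hl Huv Hcov.
  - destruct l; [|simpl in Hn; lia].
    destruct (Hcov v) as [p [[] _]]; lra.
  - destruct (Hcov v) as [y [Hy Hvy]]; [lra|].
    assert (Hrem := total_length_remove l y Hl Hy).
    assert (Hl' := ordered_intervals_remove l y Hl).
    destruct (Rle_dec u (fst y)) as [Hu|Hu].
    + assert (fst y - u <= total_length (remove interval_eq_dec y l)); [|unfold len in Hrem; lra].
      apply IH with (u := u) (v := fst y); auto.
      * assert (length (remove interval_eq_dec y l) < length l)%nat
          by (apply remove_length_lt; exact Hy).
        lia.
      * intros x Hx. destruct (Hcov x) as [p [Hp Hpx]]; [lra|].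
        exists p; split; auto. apply in_in_remove; auto.
        intros ->; lra.
    + assert (0 <= total_length (remove interval_eq_dec y l))
        by (apply total_length_nonneg; exact Hl').
      unfold len in Hrem; lra.
Qed.

Lemma nat_above (M : R) : exists N : nat, M <= INR N.
Proof. destruct (INR_archimed 1 M) as [n Hn]; [lra|]. exists n; lra. Qed.

Lemma list_upper_bound (l : list R) : exists M, forall y, In y l -> y <= M.
Proof.
  induction l as [|a l [M HM]]; [exists 0; intros y []|].
  exists (Rmax a M). intros y [<-|i]; [apply Rmax_l|].
  apply Rle_trans with M; [auto|apply Rmax_r].
Qed.

(* The family is indexed by the reals [INR n], as required by [Rtopology.family]. *)
Lemma compact_interval_subcover (K : R -> Prop) (a b : nat -> R) : compact K ->
  (forall x, K x -> exists n, a n < x < b n) ->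
  exists N, forall x, K x -> exists n, (n <= N)%nat /\ a n < x < b n.
Proof.
  intros HK Hcov.
  set (fam := fun i x => exists n, i = INR n /\ a n < x < b n).
  assert (Hind : forall i, (exists x, fam i x) -> exists n : nat, i = INR n).
  { intros i [x [n [-> _]]]; exists n; reflexivity. }
  destruct (HK (mkfamily _ fam Hind)) as [D [HDcov [l Hl]]].
  - split.
    + intros x Kx. destruct (Hcov x Kx) as [n Hn]. exists (INR n), n; auto.
    + intros i x [n [-> Hn]].
      assert (Hd : 0 < Rmin (x - a n) (b n - x)) by (apply Rmin_pos; lra).
      exists (mkposreal _ Hd). intros w Hw. unfold disc in Hw; simpl in Hw.
      apply Rabs_def2 in Hw.
      assert (Rmin (x - a n) (b n - x) <= x - a n) by apply Rmin_l.
      assert (Rmin (x - a n) (b n - x) <= b n - x) by apply Rmin_r.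
      exists n; split; [reflexivity|lra].
  - destruct (list_upper_bound l) as [M HM]. destruct (nat_above M) as [N HN].
    exists N. intros x Kx. destruct (HDcov x Kx) as [i [[n [-> Hn]] Di]].
    exists n; split; [|exact Hn].
    apply INR_le. assert (In (INR n) l) by (apply Hl; split; [exists n|]; auto).
    specialize (HM _ H); lra.
Qed.

Lemma total_length_app l1 l2 :
  total_length (l1 ++ l2) = total_length l1 + total_length l2.
Proof. induction l1; simpl; lra. Qed.

Lemma total_length_map_seq (f : nat -> R * R) N :
  total_length (map f (seq 0 (S N))) = sum_f_R0 (fun n => len (f n)) N.
Proof.
  induction N as [|N IH]; [simpl; lra|].
  rewrite seq_S, map_app, total_length_app, IH. simpl; lra.
Qed.

Lemma outer_le_finite_cover (A : R -> Prop) r : compact A -> outer_le A r ->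
  exists l, ordered_intervals l /\ total_length l <= r /\
    (forall x, A x -> exists p, In p l /\ fst p < x < snd p).
Proof.
  intros HA [a [b [Hab [Hcov Hsum]]]].
  destruct (compact_interval_subcover A a b HA Hcov) as [N HN].
  exists (map (fun n => (a n, b n)) (seq 0 (S N))). split; [|split].
  - intros p Hp. apply in_map_iff in Hp. destruct Hp as [n [<- _]]. apply Hab.
  - rewrite total_length_map_seq. apply (Hsum N).
  - intros x Hx. destruct (HN x Hx) as [n [Hn Hnx]]. exists (a n, b n).
    split; [|exact Hnx]. apply (in_map (fun n => (a n, b n))), in_seq. lia.
Qed.

Lemma outer_le_segment u v r : u <= v -> outer_le (fun x => u <= x <= v) r -> v - u <= r.
Proof.
  intros Huv Hr.
  destruct (outer_le_finite_cover _ r (compact_P3 u v) Hr) as [l [Hl [Hlr Hcov]]].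
  assert (v - u <= total_length l); [|lra].
  apply (segment_length_le_cover (length l)); auto.
Qed.

Lemma outer_le_nonneg A r : outer_le A r -> 0 <= r.
Proof. intros [a [b [Hab [_ Hsum]]]]. specialize (Hsum O); specialize (Hab O); simpl in Hsum; lra. Qed.

Lemma outer_le_mono (A B : R -> Prop) r :
  (forall x, A x -> B x) -> outer_le B r -> outer_le A r.
Proof. intros HAB [a [b [Hab [Hcov Hsum]]]]. exists a, b; split; [|split]; auto. Qed.

Lemma outer_le_interval (A : R -> Prop) p q : p <= q ->
  (forall x, A x -> p < x < q) -> outer_le A (q - p).
Proof.
  intros Hpq HA.
  exists (fun n => match n with O => p | _ => 0 end),
         (fun n => match n with O => q | _ => 0 end).
  split; [intros [|n]; lra|]. split.
  - intros x Ax. exists O. auto.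
  - intros N. induction N; simpl; lra.
Qed.

Lemma meas_infinite_right_halfline (A : R -> Prop) x0 :
  (forall x, x0 <= x -> A x) -> meas_infinite A.
Proof.
  intros HA [r Hr]. assert (0 <= r) by (eapply outer_le_nonneg; eauto).
  assert (x0 + r + 1 - x0 <= r); [|lra].
  apply outer_le_segment; [lra|].
  apply (outer_le_mono _ A); [intros x Hx; apply HA; lra|exact Hr].
Qed.

Lemma meas_infinite_left_halfline (A : R -> Prop) x0 :
  (forall x, x <= x0 -> A x) -> meas_infinite A.
Proof.
  intros HA [r Hr]. assert (0 <= r) by (eapply outer_le_nonneg; eauto).
  assert (x0 - (x0 - r - 1) <= r); [|lra].
  apply outer_le_segment; [lra|].
  apply (outer_le_mono _ A); [intros x Hx; apply HA; lra|exact Hr].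
Qed.

Definition empty_interval : R * R := (0, 0).

(* The [empty_interval] separators make [concat_upto Lf m] have more than [m]
   elements, so that its [m]-th entry no longer changes as [m] grows. *)
Fixpoint concat_upto (Lf : nat -> list (R * R)) (m : nat) : list (R * R) :=
  match m with
  | O => empty_interval :: Lf O
  | S m' => concat_upto Lf m' ++ empty_interval :: Lf (S m')
  end.

Lemma concat_upto_length Lf m : (m < length (concat_upto Lf m))%nat.
Proof.
  induction m as [|m IH]; simpl; [lia|].
  rewrite length_app; simpl; lia.
Qed.

Lemma concat_upto_prefix Lf m m' : (m <= m')%nat ->
  exists t, concat_upto Lf m' = concat_upto Lf m ++ t.
Proof.
  induction 1 as [|m' _ [t Ht]]; [exists nil; rewrite app_nil_r; reflexivity|].
  exists (t ++ empty_interval :: Lf (S m')). simpl. rewrite Ht, app_assoc. reflexivity.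
Qed.

Lemma concat_upto_nth Lf i m m' :
  (i < length (concat_upto Lf m))%nat -> (i < length (concat_upto Lf m'))%nat ->
  nth i (concat_upto Lf m) empty_interval = nth i (concat_upto Lf m') empty_interval.
Proof.
  intros Hm Hm'. destruct (Nat.le_ge_cases m m') as [h|h].
  - destruct (concat_upto_prefix Lf m m' h) as [t ->]. rewrite app_nth1; auto.
  - destruct (concat_upto_prefix Lf m' m h) as [t ->]. rewrite app_nth1; auto.
Qed.

Lemma in_concat_upto Lf n p : In p (Lf n) -> In p (concat_upto Lf n).
Proof. destruct n; simpl; auto. intros Hp; apply in_or_app; simpl; auto. Qed.

Lemma concat_upto_ordered Lf m :
  (forall n, ordered_intervals (Lf n)) -> ordered_intervals (concat_upto Lf m).
Proof.
  intros HL. induction m as [|m IH]; simpl; intros p Hp.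
  - destruct Hp as [<-|Hp]; [simpl; lra|exact (HL O p Hp)].
  - apply in_app_or in Hp. destruct Hp as [Hp|[<-|Hp]];
      [exact (IH p Hp)|simpl; lra|exact (HL (S m) p Hp)].
Qed.

Lemma total_length_concat_upto Lf m :
  total_length (concat_upto Lf m) = sum_f_R0 (fun n => total_length (Lf n)) m.
Proof.
  induction m as [|m IH]; simpl.
  - unfold len; simpl; lra.
  - rewrite total_length_app, IH. simpl. unfold len at 1; simpl; lra.
Qed.

Lemma partial_sum_nth_le_total_length l N : ordered_intervals l ->
  sum_f_R0 (fun m => len (nth m l empty_interval)) N <= total_length l.
Proof.
  revert N; induction l as [|p l IH]; intros N Hl.
  - rewrite (sum_eq _ (fun _ => 0)) by (intros [|i] _; unfold len; simpl; lra).
    rewrite sum_cte; simpl; lra.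
  - assert (Hl' : ordered_intervals l) by (intros q Hq; apply Hl; right; exact Hq).
    destruct N as [|N].
    + assert (0 <= total_length l) by (apply total_length_nonneg; exact Hl').
      simpl; lra.
    + rewrite decomp_sum by lia. specialize (IH N Hl'). simpl; lra.
Qed.

Lemma geometric_partial_sum_le eps m : 0 < eps ->
  sum_f_R0 (fun n => eps / 2 ^ S n) m <= eps.
Proof.
  intros Heps.
  assert (H : sum_f_R0 (fun n => eps / 2 ^ S n) m = eps - eps / 2 ^ S m).
  { induction m as [|m IH]; simpl in *; [field|rewrite IH; field]; 
      apply pow_nonzero; lra. }
  rewrite H. assert (0 < eps / 2 ^ S m) by (apply Rdiv_lt_0_compat; [lra|apply pow_lt; lra]).
  lra.
Qed.

(* Compactness turns each cover into a finite list; the lists are then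
   concatenated into a single sequence of intervals. *)
Lemma outer_null_countable_union (A : nat -> R -> Prop) :
  (forall n, compact (A n)) ->
  (forall n eps, 0 < eps -> outer_le (A n) eps) ->
  forall eps, 0 < eps -> outer_le (fun x => exists n, A n x) eps.
Proof.
  intros HK Hnull eps Heps.
  assert (Hex : forall n, exists l, ordered_intervals l /\ total_length l <= eps / 2 ^ S n /\
     (forall x, A n x -> exists p, In p l /\ fst p < x < snd p)).
  { intros n. apply outer_le_finite_cover; [apply HK|apply Hnull].
    apply Rdiv_lt_0_compat; [lra|apply pow_lt; lra]. }
  apply choice in Hex. destruct Hex as [Lf HL].
  assert (Hord : forall m, ordered_intervals (concat_upto Lf m))
    by (intro m; apply concat_upto_ordered; intro n; apply HL).
  set (I := fun m => nth m (concat_upto Lf m) empty_interval).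
  exists (fun m => fst (I m)), (fun m => snd (I m)). split; [|split].
  - intros m. apply (Hord m), nth_In, concat_upto_length.
  - intros x [n Hx]. destruct (proj2 (proj2 (HL n)) x Hx) as [p [Hp Hpx]].
    apply (in_concat_upto Lf n) in Hp. destruct (In_nth _ _ empty_interval Hp) as [i [Hi <-]].
    exists i. unfold I. rewrite (concat_upto_nth Lf i i n); auto using concat_upto_length.
  - intros N.
    rewrite (sum_eq _ (fun m => len (nth m (concat_upto Lf N) empty_interval))).
    2:{ intros i Hi. unfold I, len. rewrite (concat_upto_nth Lf i i N); auto.
        - apply concat_upto_length.
        - apply Nat.le_lt_trans with N; [exact Hi|apply concat_upto_length]. }
    eapply Rle_trans; [apply partial_sum_nth_le_total_length, Hord|].
    rewrite total_length_concat_upto.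
    eapply Rle_trans; [|apply (geometric_partial_sum_le eps N Heps)].
    apply sum_Rle. intros n _. apply HL.
Qed.

Lemma closed_set_inter (D1 D2 : R -> Prop) :
  closed_set D1 -> closed_set D2 -> closed_set (intersection_domain D1 D2).
Proof.
  intros H1 H2 x Hx. unfold complementary, intersection_domain in Hx.
  destruct (classic (D1 x)) as [Hx1|Hx1].
  - apply (neighbourhood_P1 (complementary D2)); [intros y Hy [_ Hy2]; exact (Hy Hy2)|].
    apply H2. intro Hx2. exact (Hx (conj Hx1 Hx2)).
  - apply (neighbourhood_P1 (complementary D1)); [intros y Hy [Hy1 _]; exact (Hy Hy1)|].
    apply H1, Hx1.
Qed.

Lemma compact_closed_inter_segment (F : R -> Prop) lo hi :
  closed_set F -> compact (fun x => F x /\ lo <= x <= hi).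
Proof.
  intros HF. apply (compact_P4 (fun x => lo <= x <= hi)); [apply compact_P3| |].
  - apply closed_set_inter; [exact HF|apply compact_P2, compact_P3].
  - intros x Hx; apply Hx.
Qed.

Lemma is_open_closed_complement (G : R -> Prop) :
  is_open G -> closed_set (fun x => ~ G x).
Proof.
  intros HG x Hx. apply NNPP in Hx.
  destruct (HG x Hx) as [e [He HGe]]. exists (mkposreal e He).
  intros y Hy Hny. exact (Hny (HGe y Hy)).
Qed.

Lemma meas_eq_nonneg A r : meas_eq A r -> 0 <= r.
Proof.
  intros [Hle _]. apply Rnot_lt_le. intros Hr.
  assert (H := outer_le_nonneg _ _ (Hle (- r / 2) ltac:(lra))). lra.
Qed.

Lemma meas_eq_mono A B r s :
  (forall x, A x -> B x) -> meas_eq A r -> meas_eq B s -> r <= s.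
Proof.
  intros HAB [_ HA] [HB _]. apply Rnot_lt_le. intros Hlt.
  assert (H := HA _ (outer_le_mono A B _ HAB (HB ((r - s) / 2) ltac:(lra)))). lra.
Qed.

Section OrientedMeasure.

Variables (F : R -> Prop) (z : R) (j : R -> R).
Hypothesis Hj : is_j F z j.

Lemma is_j_increasing : increasing j.
Proof.
  intros x y Hxy. destruct (Hj x) as [Hx1 Hx2], (Hj y) as [Hy1 Hy2].
  destruct (Rle_dec z x) as [zx|zx].
  - apply (meas_eq_mono (fun t => F t /\ z <= t <= x) (fun t => F t /\ z <= t <= y));
      [intros t [Ft Ht]; split; [exact Ft|lra]|apply Hx1, zx|apply Hy1; lra].
  - destruct (Rle_dec z y) as [zy|zy].
    + assert (0 <= - j x) by (apply (meas_eq_nonneg _ _ (Hx2 ltac:(lra)))).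
      assert (0 <= j y) by (apply (meas_eq_nonneg _ _ (Hy1 zy))). lra.
    + assert (- j y <= - j x); [|lra].
      apply (meas_eq_mono (fun t => F t /\ y <= t <= z) (fun t => F t /\ x <= t <= z));
        [intros t [Ft Ht]; split; [exact Ft|lra]|apply Hy2; lra|apply Hx2; lra].
Qed.

Lemma is_j_base : j z = 0.
Proof.
  destruct (Hj z) as [Hz _]. specialize (Hz (Rle_refl z)).
  apply Rle_antisym; [apply Rnot_lt_le; intros Hpos|exact (meas_eq_nonneg _ _ Hz)].
  assert (Hle : outer_le (fun t => F t /\ z <= t <= z) ((z + j z / 4) - (z - j z / 4)))
    by (apply outer_le_interval; [lra|intros t [_ Ht]; lra]).
  assert (H := proj2 Hz _ Hle). lra.
Qed.

Lemma is_j_zero_null_between : (forall x, j x = 0) ->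
  forall x eps, 0 < eps -> outer_le (fun t => F t /\ Rmin x z <= t <= Rmax x z) eps.
Proof.
  intros H0 x eps Heps. destruct (Rle_dec z x) as [zx|xz].
  - rewrite Rmin_right, Rmax_left by exact zx.
    assert (H := proj1 (proj1 (Hj x) zx) eps Heps). rewrite H0 in H.
    replace eps with (0 + eps) by lra. exact H.
  - rewrite Rmin_left, Rmax_right by lra.
    assert (H := proj1 (proj2 (Hj x) ltac:(lra)) eps Heps). rewrite H0 in H.
    replace eps with (- 0 + eps) by lra. exact H.
Qed.

(* If [j] vanished identically, [F] would be a countable union of null compact
   pieces [F] between [z] and [z + n], resp. [z - n]. *)
Lemma is_j_nonconstant : closed_set F -> meas_pos F -> exists x, j x <> j z.
Proof.
  intros HF Hpos. rewrite is_j_base. apply NNPP; intros Hn.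
  assert (H0 : forall x, j x = 0) by (intro x; apply NNPP; intro h; apply Hn; exists x; exact h).
  set (s := fun n : nat => if Nat.even n then z + INR n else z - INR n).
  apply Hpos. intros eps Heps.
  apply (outer_le_mono _ (fun t => exists n, F t /\ Rmin (s n) z <= t <= Rmax (s n) z)).
  - intros t Ft. destruct (nat_above (Rabs (t - z))) as [k Hk].
    assert (0 <= INR k) by apply pos_INR.
    destruct (Rle_dec z t) as [zt|tz].
    + assert (Hs : s (2 * k)%nat = z + 2 * INR k)
        by (unfold s; rewrite Nat.even_even, mult_INR; reflexivity).
      rewrite Rabs_right in Hk by lra.
      exists (2 * k)%nat; split; [exact Ft|split].
      * apply Rle_trans with z; [apply Rmin_r|exact zt].
      * apply Rle_trans with (s (2 * k)%nat); [rewrite Hs; lra|apply Rmax_l].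
    + assert (Hs : s (2 * k + 1)%nat = z - (2 * INR k + 1))
        by (unfold s; rewrite Nat.even_odd, plus_INR, mult_INR; reflexivity).
      rewrite Rabs_left in Hk by lra.
      exists (2 * k + 1)%nat; split; [exact Ft|split].
      * apply Rle_trans with (s (2 * k + 1)%nat); [apply Rmin_l|rewrite Hs; lra].
      * apply Rle_trans with z; [lra|apply Rmax_r].
  - apply outer_null_countable_union; [| |exact Heps].
    + intros n; apply compact_closed_inter_segment, HF.
    + intros n; apply is_j_zero_null_between, H0.
Qed.

End OrientedMeasure.

Lemma ele_elt_trans x a b : ele x (Fin a) -> a < b -> elt x (Fin b).
Proof. intros [H| ->] Hab; [destruct x; simpl in *; auto; lra|exact Hab]. Qed.

Lemma elt_ele_trans a b y : a < b -> ele (Fin b) y -> elt (Fin a) y.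
Proof. intros Hab [H| <-]; [destruct y; simpl in *; auto; lra|exact Hab]. Qed.

Lemma ele_neq_elt x y : ele x y -> x <> y -> elt x y.
Proof. intros [H|H] Hn; tauto. Qed.

Lemma elt_not_ele x y : elt x y -> ~ ele y x.
Proof.
  intros H [H'|e]; [|subst y]; destruct x; try destruct y; simpl in *; auto; lra.
Qed.

Lemma ele_Fin_le a b : ele (Fin a) (Fin b) -> a <= b.
Proof. intros [H|H]; [simpl in H; lra|injection H; lra]. Qed.

Lemma esup_exists_gt (S : R -> Prop) a c : is_esup S a -> elt (Fin c) a ->
  exists x, S x /\ c < x.
Proof.
  intros [_ Hleast] Hc. apply NNPP; intros Hn. apply (elt_not_ele _ _ Hc), Hleast.
  intros x Sx. destruct (Rlt_le_dec c x) as [Hcx|Hxc]; [elim Hn; exists x; auto|].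
  destruct (Rle_lt_or_eq_dec _ _ Hxc) as [h| ->]; [left; exact h|right; reflexivity].
Qed.

Lemma einf_exists_lt (S : R -> Prop) b c : is_einf S b -> elt b (Fin c) ->
  exists x, S x /\ x < c.
Proof.
  intros [_ Hgreatest] Hc. apply NNPP; intros Hn. apply (elt_not_ele _ _ Hc), Hgreatest.
  intros x Sx. destruct (Rlt_le_dec x c) as [Hxc|Hcx]; [elim Hn; exists x; auto|].
  destruct (Rle_lt_or_eq_dec _ _ Hcx) as [h| ->]; [left; exact h|right; reflexivity].
Qed.

Section RangeEndpoints.

Variables (j : R -> R) (astar bstar : ereal).
Hypothesis Hinc : increasing j.
Hypothesis Ha : is_esup (fun y => exists x, j x = y) astar.
Hypothesis Hb : is_einf (fun y => exists x, j x = y) bstar.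

Lemma esup_unattained_preimage_infinite : (~ exists x, Fin (j x) = astar) ->
  forall c, elt (Fin c) astar -> meas_infinite (fun x => eint (Fin c) astar (j x)).
Proof.
  intros Hna c Hc.
  destruct (esup_exists_gt _ _ _ Ha Hc) as [y [[x1 <-] Hcx1]].
  apply (meas_infinite_right_halfline _ x1). intros x Hx. split.
  - simpl. assert (j x1 <= j x) by (apply Hinc, Hx). lra.
  - apply ele_neq_elt; [apply (proj1 Ha); exists x; reflexivity|].
    intros e; apply Hna; exists x; exact e.
Qed.

Lemma einf_unattained_preimage_infinite : (~ exists x, Fin (j x) = bstar) ->
  forall c, elt bstar (Fin c) -> meas_infinite (fun x => eint bstar (Fin c) (j x)).
Proof.
  intros Hna c Hc.
  destruct (einf_exists_lt _ _ _ Hb Hc) as [y [[x1 <-] Hx1c]].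
  apply (meas_infinite_left_halfline _ x1). intros x Hx. split.
  - apply ele_neq_elt; [apply (proj1 Hb); exists x; reflexivity|].
    intros e; apply Hna; exists x; symmetry; exact e.
  - simpl. assert (j x <= j x1) by (apply Hinc, Hx). lra.
Qed.

Hypothesis Hnonconst : exists x y, j x <> j y.

Lemma exists_other_value x1 : exists x0, j x0 <> j x1.
Proof.
  destruct Hnonconst as [x [y Hxy]].
  destruct (Req_dec (j x) (j x1)) as [e|ne]; [exists y; congruence|exists x; exact ne].
Qed.

(* Taking [x0] with [j x0 < j x1 = astar] and [c] the midpoint of [j x0] and
   [j x1], monotonicity confines the preimage of [(c, astar)] to [(x0, x1)]. *)
Lemma esup_attained_preimage_bounded x1 : Fin (j x1) = astar ->
  exists c, eint bstar astar c /\ ~ meas_infinite (fun x => eint (Fin c) astar (j x)).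
Proof.
  intros Hx1. destruct (exists_other_value x1) as [x0 Hne].
  assert (Hlt : j x0 < j x1).
  { assert (j x0 <= j x1); [|lra].
    apply ele_Fin_le. rewrite Hx1. apply (proj1 Ha). exists x0; reflexivity. }
  assert (Hx01 : x0 <= x1)
    by (apply Rnot_lt_le; intros h; assert (j x1 <= j x0) by (apply Hinc; lra); lra).
  exists ((j x0 + j x1) / 2). split; [split|].
  - apply ele_elt_trans with (j x0); [apply (proj1 Hb); exists x0; reflexivity|lra].
  - rewrite <- Hx1. simpl. lra.
  - intros Hinf. apply Hinf. exists (x1 - x0). apply outer_le_interval; [lra|].
    intros x [Hcx Hxa]. rewrite <- Hx1 in Hxa. simpl in Hcx, Hxa. split.
    + apply Rnot_le_lt; intros h. assert (j x <= j x0) by (apply Hinc, h). lra.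
    + apply Rnot_le_lt; intros h. assert (j x1 <= j x) by (apply Hinc, h). lra.
Qed.

Lemma einf_attained_preimage_bounded x1 : Fin (j x1) = bstar ->
  exists c, eint bstar astar c /\ ~ meas_infinite (fun x => eint bstar (Fin c) (j x)).
Proof.
  intros Hx1. destruct (exists_other_value x1) as [x0 Hne].
  assert (Hlt : j x1 < j x0).
  { assert (j x1 <= j x0); [|lra].
    apply ele_Fin_le. rewrite Hx1. apply (proj1 Hb). exists x0; reflexivity. }
  assert (Hx10 : x1 <= x0)
    by (apply Rnot_lt_le; intros h; assert (j x0 <= j x1) by (apply Hinc; lra); lra).
  exists ((j x1 + j x0) / 2). split; [split|].
  - rewrite <- Hx1. simpl. lra.
  - apply elt_ele_trans with (j x0); [lra|apply (proj1 Ha); exists x0; reflexivity].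
  - intros Hinf. apply Hinf. exists (x0 - x1). apply outer_le_interval; [lra|].
    intros x [Hbx Hxc]. rewrite <- Hx1 in Hbx. simpl in Hbx, Hxc. split.
    + apply Rnot_le_lt; intros h. assert (j x <= j x1) by (apply Hinc, h). lra.
    + apply Rnot_le_lt; intros h. assert (j x0 <= j x) by (apply Hinc, h). lra.
Qed.

End RangeEndpoints.

Theorem mainTheorem12
  (G : R -> Prop) (z : R) (j : R -> R) (astar bstar : ereal)
  (HGopen : is_open G)
  (HGdense : forall a b, a < b -> meas_pos (fun x => G x /\ a < x /\ x < b))
  (HFpos : meas_pos (fun x => ~ G x))
  (HFperf : no_isolated_points (fun x => ~ G x))
  (HGinf : meas_infinite G)
  (HzF : ~ G z) (HzH : ~ endpoints G z)
  (Hj : is_j (fun x => ~ G x) z j)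
  (Ha : is_esup (fun y => exists x, j x = y) astar)
  (Hb : is_einf (fun y => exists x, j x = y) bstar) :
  ((~ exists x, Fin (j x) = astar) <->
     (forall c, eint bstar astar c ->
        meas_infinite (fun x => eint (Fin c) astar (j x))))
  /\
  ((~ exists x, Fin (j x) = bstar) <->
     (forall c, eint bstar astar c ->
        meas_infinite (fun x => eint bstar (Fin c) (j x)))).
Proof.
  assert (Hinc := is_j_increasing _ _ _ Hj).
  assert (Hnonconst : exists x y, j x <> j y).
  { destruct (is_j_nonconstant _ _ _ Hj (is_open_closed_complement G HGopen) HFpos)
      as [x Hx].
    exists x, z; exact Hx. }
  split; split.
  - intros Hna c [_ Hc]. exact (esup_unattained_preimage_infinite j astar Hinc Ha Hna c Hc).
  - intros Hinf [x1 Hx1].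
    destruct (esup_attained_preimage_bounded j astar bstar Hinc Ha Hb Hnonconst x1 Hx1)
      as [c [Hc Hfin]].
    exact (Hfin (Hinf c Hc)).
  - intros Hna c [Hc _]. exact (einf_unattained_preimage_infinite j bstar Hinc Hb Hna c Hc).
  - intros Hinf [x1 Hx1].
    destruct (einf_attained_preimage_bounded j astar bstar Hinc Ha Hb Hnonconst x1 Hx1)
      as [c [Hc Hfin]].
    exact (Hfin (Hinf c Hc)).
Qed.
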